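(* Let $G$ be a finite simple graph with edge weight function $w$ and vertex weight function $w_1$, let $\theta$ be a real number, and let $p$ be a path of length at least $1$ in $G$. Then $\mathrm{mult}(\theta,G\setminus p)\ge \mathrm{mult}(\theta,G)-1$, where $G\setminus p$ denotes $G$ with all vertices of $p$ deleted.
   Context: An edge weight function $w$ assigns a nonzero complex number to each edge; a vertex weight function $w_1$ assigns a real number (possibly $0$) to each vertex; subgraphs carry restricted weights; deleting vertices also deletes incident edges. For $A\subseteq E(G)$, $w(A)=\prod_{e\in A}w(e)$. $\mu_w(G,x)=\sum_{M}(-1)^{|M|}|w(M)|^2x^{n-2|M|}$ over all matchings $M$ (including empty). $\eta_{(w,w_1)}(G,x)=\sum_{S\subseteq V(G)}(-1)^{|V(G)\setminus S|}\big(\prod_{y\in V(G)\setminus S}w_1(y)\big)\mu_w(G[S],x)$ with $G[S]$ the induced subgraph; $\mu_w,\eta_{(w,w_1)}$ of the empty graph equal $1$. $\mathrm{mult}(\theta,H)$ is the multiplicity of $\theta$ as a root of $\eta_{(w,w_1)}(H,x)$ ($0$ if not a root). *)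

From HB Require Import structures.
From mathcomp Require Import all_boot all_algebra.
From mathcomp Require Import complex.
From mathcomp Require Import reals.
Set Implicit Arguments. Unset Strict Implicit. Unset Printing Implicit Defensive.
Import GRing.Theory Num.Theory.
Local Open Scope ring_scope.

(* An edge weight function is a function w : {set V} -> R[i] (complex numbers
   over the reals R), required to be nonzero on edges; a vertex weight
   function is w1 : V -> R.  A (sub)graph is represented by the vertex set S
   it is induced on. *)

Definition simple_graph (V : finType) (e : rel V) : Prop :=
  symmetric e /\ irreflexive e.

Definition edges (V : finType) (e : rel V) (S : {set V}) : {set {set V}} :=
  [set E : {set V} | [exists u in S, exists v in S, e u v && (E == [set u; v])]].

Definition matching (V : finType) (e : rel V) (S : {set V}) (M : {set {set V}}) : bool :=
  (M \subset edges e S) &&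
  [forall E1 in M, forall E2 in M, (E1 != E2) ==> [disjoint E1 & E2]].

Section Polys.
Variables (R : realType) (V : finType) (e : rel V).
Variables (w : {set V} -> R[i]) (w1 : V -> R).

Definition mu_w (S : {set V}) : {poly R[i]} :=
  \sum_(M : {set {set V}} | matching e S M)
     (-1) ^+ #|M| * (`|\prod_(E in M) w E| ^+ 2) *: 'X^(#|S| - 2 * #|M|).

Definition eta_w (S : {set V}) : {poly R[i]} :=
  \sum_(T : {set V} | T \subset S)
     ((-1) ^+ #|S :\: T| * \prod_(y in S :\: T) Complex (w1 y) 0) *: mu_w T.

Definition mult (theta : R) (S : {set V}) : nat := mup (Complex theta 0) (eta_w S).

End Polys.

(* Over the reals, eta_(w,w1)(G[S]) is the matching polynomial P(S) in which
   every vertex y left uncovered contributes X - w1 y and every matched edge E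
   the weight |w E|^2 > 0.  It satisfies
     P(S) = (X - w1 u) P(S - u) - sum_(y ~ u) |w uy|^2 P(S - u - y),
     P(S)' = sum_z P(S - z).
   By the first identity, the Christoffel-Darboux difference
   P(S-u) P(S-v) - P(S) P(S-u-v) is a positive combination of the squares
   P(S \ p)^2 over the u-v paths p; the second identity turns the Wronskian
   P(S-x) P(S)' - P(S) P(S-x)' into P(S-x)^2 plus the sum of these differences
   over v.  All these summands are nonnegative just to the right of theta, so
   no cancellation occurs and the order of the Wronskian at theta is at most
   2 mult(theta, S-x) and at most 2 mult(theta, S \ p) for the given path p
   from x.  Since that order is also at least
   mult(theta, S) + mult(theta, S-x) - 1, we get
   mult(theta, S \ p) >= mult(theta, S) - 1. *)

From mathcomp Require Import all_boot all_algebra.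
From mathcomp Require Import complex.
From mathcomp Require Import reals.
From mathcomp Require Import ring zify.
Set Implicit Arguments. Unset Strict Implicit. Unset Printing Implicit Defensive.
Import order.Order.TTheory GRing.Theory Num.Theory.
Local Open Scope ring_scope.

Lemma setD1C (T : finType) (A : {set T}) x y : A :\ x :\ y = A :\ y :\ x.
Proof. by rewrite !setDDl setUC. Qed.

Lemma setU1D1_eq (T : finType) (x : T) (A : {set T}) :
  ((x |: A) :\ x == A) = (x \notin A).
Proof.
case: (boolP (x \in A)) => xA; last by rewrite setU1K ?eqxx.
by apply/negbTE; apply: contraTneq xA => <-; rewrite setD11.
Qed.

Lemma setD_cons (T : finType) (A : {set T}) x (s : seq T) :
  A :\: [set v in x :: s] = A :\ x :\: [set v in s].
Proof. by apply/setP=> z; rewrite !inE; case: (z == x); rewrite ?andbF. Qed.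

Section Matchings.
Variables (V : finType) (e : rel V).
Hypotheses (e_sym : symmetric e) (e_irr : irreflexive e).

Lemma edgesP (T : {set V}) E :
  reflect (exists u v, [/\ u \in T, v \in T, e u v & E = [set u; v]]) (E \in edges e T).
Proof.
rewrite inE; apply: (iffP existsP) => [[u /andP[uT /existsP[v]]]|[u [v [uT vT euv ->]]]].
  by case/and3P=> vT euv /eqP ->; exists u, v.
by exists u; rewrite uT; apply/existsP; exists v; rewrite vT euv eqxx.
Qed.

Lemma in_edges (T : {set V}) E :
  (E \in edges e T) = (E \in edges e setT) && (E \subset T).
Proof.
apply/edgesP/andP => [[u [v [uT vT euv ->]]]|[/edgesP[u [v [_ _ euv ->]]]]].
  by split; [apply/edgesP; exists u, v; rewrite !inE | rewrite subUset !sub1set uT vT].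
by rewrite subUset !sub1set => /andP[uT vT]; exists u, v.
Qed.

Lemma card_edge (T : {set V}) E : E \in edges e T -> #|E| = 2%N.
Proof.
case/edgesP=> u [v [_ _ euv ->]]; rewrite cards2.
by case: eqVneq euv => // ->; rewrite e_irr.
Qed.

Lemma matchingE (T : {set V}) M :
  matching e T M = (M \subset edges e T) && trivIset M.
Proof.
congr (_ && _); apply/forall_inP/trivIsetP => [H A B AM BM|H A AM].
  by move/forall_inP: (H A AM) => /(_ B BM) /implyP.
by apply/forall_inP=> B BM; apply/implyP; apply: H.
Qed.

Lemma matching_cover (T : {set V}) M :
  matching e T M = matching e setT M && (cover M \subset T).
Proof.
rewrite !matchingE andbAC; congr (_ && _).
apply/subsetP/andP => [sub|[/subsetP sub /bigcupsP cov] E EM].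
  split; apply/subsetP.
    by move=> E /sub; rewrite in_edges => /andP[].
  by move=> z /bigcupP[E /sub]; rewrite in_edges => /andP[_ /subsetP]; apply.
by rewrite in_edges sub ?cov.
Qed.

Lemma card_cover_matching (T : {set V}) M :
  matching e T M -> #|cover M| = (2 * #|M|)%N.
Proof.
rewrite matchingE => /andP[/subsetP sub /eqP <-].
by rewrite mulnC -sum_nat_const; apply: eq_bigr => E /sub /card_edge.
Qed.

Lemma matchingD1 (S : {set V}) u M :
  matching e (S :\ u) M = matching e S M && (u \notin cover M).
Proof. by rewrite matching_cover (matching_cover S) subsetD1 andbA. Qed.

Lemma matching_set0 M : matching e set0 M = (M == set0).
Proof.
apply/idP/eqP => [|->]; last by rewrite matchingE sub0set /trivIset /cover !big_set0 cards0.
move=> mM; apply/eqP; rewrite -cards_eq0; have := card_cover_matching mM.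
move: mM; rewrite matching_cover subset0 => /andP[_ /eqP ->].
by rewrite cards0; case: #|M|.
Qed.

Lemma matchingU1_edge E M : E \in edges e setT ->
  matching e setT (E |: M) && (E \notin M) = matching e setT M && [disjoint E & cover M].
Proof.
move=> Eedge; rewrite !matchingE subUset sub1set Eedge /=.
apply/idP/idP => [/andP[/andP[sub tr] EM]|/andP[/andP[sub tr] dis]].
  rewrite sub (trivIsetS (subsetUr _ _) tr) /=; apply/bigcup_disjointP=> B BM.
  have /trivIsetP/(_ E B) := tr; apply; rewrite ?setU11 ?setU1r //.
  by apply: contraNneq EM => ->.
have n0M : set0 \notin M by apply/negP=> /(subsetP sub) /card_edge; rewrite cards0.
have dEM : {in M, forall B : {set V}, [disjoint E & B]}.
  by move=> B BM; apply: disjointWr dis; apply: bigcup_sup.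
by have [-> ->] := trivIsetU1 dEM tr n0M; rewrite sub.
Qed.

Lemma matchingU1 (S : {set V}) u y M : u \in S -> y \in S -> e u y ->
  matching e S ([set u; y] |: M) && ([set u; y] \notin M) = matching e (S :\ u :\ y) M.
Proof.
move=> uS yS euy; have Eedge : [set u; y] \in edges e setT by apply/edgesP; exists u, y.
rewrite (matching_cover (S :\ u :\ y)) matching_cover andbAC matchingU1_edge //.
rewrite !subsetD1 /cover bigcup_setU big_set1 -/(cover M) subUset subUset !sub1set uS yS.
rewrite disjoints_subset subUset !sub1set !inE andTb.
by case: (matching e _ M); case: (_ \subset S); case: (u \in _); case: (y \in _).
Qed.

Lemma matching_partner (S : {set V}) u M : matching e S M -> u \in cover M ->
  exists2 y, (y \in S) && e u y & [set u; y] \in M.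
Proof.
rewrite matchingE => /andP[/subsetP sub _] /bigcupP[E EM].
have /edgesP[p [q [pS qS epq EE]]] := sub E EM.
rewrite EE !inE => /orP[]/eqP ->; first by exists q; rewrite ?qS ?epq -?EE.
by exists p; rewrite ?pS 1?e_sym ?epq // setUC -EE.
Qed.

Lemma matching_partner_uniq (S : {set V}) u M y y' : matching e S M -> e u y ->
  [set u; y] \in M -> [set u; y'] \in M -> y = y'.
Proof.
rewrite matchingE => /andP[_ /trivIsetP tr] euy yM y'M.
have [EE|NE] := eqVneq [set u; y] [set u; y'].
  have : y \in [set u; y'] by rewrite -EE !inE eqxx orbT.
  by rewrite !inE => /orP[/eqP yu|/eqP //]; move: euy; rewrite yu e_irr.
by have := tr _ _ yM y'M NE; rewrite disjoints_subset subUset sub1set !inE eqxx.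
Qed.

End Matchings.

Section MatchingPoly.
Variables (R : comRingType) (V : finType) (e : rel V).
Hypotheses (e_sym : symmetric e) (e_irr : irreflexive e).
Variables (a : V -> R) (c : {set V} -> R).

Definition matching_term (S : {set V}) (M : {set {set V}}) : {poly R} :=
  ((-1) ^+ #|M| * \prod_(E in M) c E) *: \prod_(y in S :\: cover M) ('X - (a y)%:P).

Definition matchpoly (S : {set V}) : {poly R} :=
  \sum_(M | matching e S M) matching_term S M.

Lemma sum_uncovered_matchings (S : {set V}) u : u \in S ->
  \sum_(M | matching e S M && (u \notin cover M)) matching_term S M
  = ('X - (a u)%:P) * matchpoly (S :\ u).
Proof.
move=> uS; rewrite mulr_sumr; apply: eq_big => M; first by rewrite matchingD1.
move=> /andP[_ uM]; rewrite /matching_term -scalerAr.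
rewrite (big_setD1 (A := S :\: cover M) u) ?inE ?uS ?uM //=.
by congr (_ *: (_ * _)); apply: eq_bigl => z; rewrite !inE andbCA.
Qed.

Lemma matching_termU1 (S : {set V}) u y (M : {set {set V}}) : [set u; y] \notin M ->
  matching_term S ([set u; y] |: M) = - c [set u; y] *: matching_term (S :\ u :\ y) M.
Proof.
move=> EM; rewrite /matching_term cardsU1 EM big_setU1 //= /cover big_setU1 //=.
rewrite -/(cover M) scalerA add1n exprS mulN1r mulNr mulrCA; congr (_ *: _).
  by rewrite mulNr.
by apply: eq_bigl => z; rewrite !inE; case: (z == u); case: (z == y); case: (z \in cover M).
Qed.

Lemma sum_matchings_with_edge (S : {set V}) u y : u \in S -> y \in S -> e u y ->
  \sum_(M | matching e S M && ([set u; y] \in M)) matching_term S M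
  = - c [set u; y] *: matchpoly (S :\ u :\ y).
Proof.
move=> uS yS euy; set E := [set u; y].
rewrite (reindex_onto (fun M => E |: M) (fun M => M :\ E)) /=; last first.
  by move=> M /andP[_ EM]; rewrite setD1K.
rewrite /matchpoly scaler_sumr; apply: eq_big => M.
  by rewrite setU11 andbT setU1D1_eq matchingU1.
by move=> /andP[_]; rewrite setU1D1_eq; apply: matching_termU1.
Qed.

Lemma sum_covered_matchings (S : {set V}) u : u \in S ->
  \sum_(M | matching e S M && (u \in cover M)) matching_term S M
  = - \sum_(y in S | e u y) c [set u; y] *: matchpoly (S :\ u :\ y).
Proof.
move=> uS; rewrite -sumrN.
under [RHS]eq_bigr => y /andP[yS euy] do rewrite -scaleNr -sum_matchings_with_edge //.
rewrite (exchange_big_dep (fun M => matching e S M && (u \in cover M))) /=; last first.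
  move=> y M /andP[_ euy] /andP[mM EM]; rewrite mM; apply/bigcupP.
  by exists [set u; y]; rewrite // !inE eqxx.
apply: eq_bigr => M /andP[mM uM]; have [y yS yM] := matching_partner e_sym mM uM.
rewrite (big_pred1 y) // => y' /=; rewrite mM /=.
apply/andP/eqP => [[/andP[_ euy'] y'M]|-> //].
exact: (matching_partner_uniq e_irr mM euy' y'M yM).
Qed.

Lemma matchpoly_rec (S : {set V}) u : u \in S ->
  matchpoly S = ('X - (a u)%:P) * matchpoly (S :\ u)
                - \sum_(y in S | e u y) c [set u; y] *: matchpoly (S :\ u :\ y).
Proof.
move=> uS; rewrite {1}/matchpoly (bigID (fun M => u \in cover M)) /= addrC.
by rewrite sum_uncovered_matchings // sum_covered_matchings.
Qed.

Lemma deriv_prod_XsubC (A : {set V}) :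
  (\prod_(y in A) ('X - (a y)%:P))^`() = \sum_(z in A) \prod_(y in A :\ z) ('X - (a y)%:P).
Proof.
elim: {A}_.+1 {-2}A (ltnSn #|A|) => // n IH A.
have [->|[z0 z0A]] := set_0Vmem A; first by rewrite !big_set0 derivC.
rewrite ltnS (cardsD1 z0) z0A => ltA.
rewrite (big_setD1 z0) //= derivM derivXsubC mul1r IH // [RHS](big_setD1 z0) //=.
congr (_ + _); rewrite mulr_sumr; apply: eq_bigr => z /setD1P[zz0 zA].
by rewrite [RHS](big_setD1 z0) ?inE ?z0A 1?eq_sym ?zz0 // setD1C.
Qed.

Lemma deriv_matchpoly (S : {set V}) : (matchpoly S)^`() = \sum_(z in S) matchpoly (S :\ z).
Proof.
rewrite /matchpoly /matching_term raddf_sum /=.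
under eq_bigr => M _ do rewrite derivZ deriv_prod_XsubC scaler_sumr.
rewrite (exchange_big_dep (mem S)) /=; last by move=> M z _ /setDP[].
apply: eq_bigr => z zS; apply: eq_big => [M|M _]; first by rewrite matchingD1 !inE zS andbT.
by congr (_ *: _); apply: eq_bigl => t; rewrite !inE andbCA.
Qed.

Lemma matchpoly_set0 : matchpoly set0 = 1.
Proof.
rewrite /matchpoly (big_pred1 set0) => [|M]; last by rewrite matching_set0.
by rewrite /matching_term cards0 set0D !big_set0 mulr1 scale1r.
Qed.

Lemma matchpoly_monic (S : {set V}) : matchpoly S \is monic /\ size (matchpoly S) = #|S|.+1.
Proof.
elim: {S}_.+1 {-2}S (ltnSn #|S|) => // n IH S ltS.
have [->|[u uS]] := set_0Vmem S; first by rewrite matchpoly_set0 monic1 size_poly1 cards0.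
have cardS : #|S| = #|S :\ u|.+1 by rewrite (cardsD1 u S) uS.
have /IH[monicSu sizeSu] : (#|S :\ u| < n)%N by rewrite -ltnS -cardS.
have size_head : size (('X - (a u)%:P) * matchpoly (S :\ u)) = #|S|.+1.
  by rewrite size_monicM ?monicXsubC ?monic_neq0 // size_XsubC sizeSu cardS.
have size_tail : (size (\sum_(y in S | e u y) c [set u; y] *: matchpoly (S :\ u :\ y))%R
                  < #|S|.+1)%N.
  apply: leq_ltn_trans (size_sum _ _ _) _; apply/bigmax_leqP => y /andP[yS euy].
  apply: leq_trans (size_scale_leq _ _) _.
  have yS' : y \in S :\ u by rewrite !inE yS andbT; apply: contraTneq euy => ->; rewrite e_irr.
  have cardSu : #|S :\ u| = #|S :\ u :\ y|.+1 by rewrite (cardsD1 y (S :\ u)) yS'.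
  have /IH[_ ->] : (#|S :\ u :\ y| < n)%N by rewrite cardS cardSu in ltS; lia.
  by rewrite cardS cardSu.
rewrite (matchpoly_rec uS) monicE lead_coefDl ?size_polyDl ?size_polyN ?size_head //.
by rewrite -monicE monicMl ?monicXsubC.
Qed.

Lemma matchpoly_neq0 (S : {set V}) : matchpoly S != 0.
Proof. by have [/monic_neq0] := matchpoly_monic S. Qed.

Lemma prod_XsubC_subsets (A : {set V}) :
  \prod_(y in A) ('X - (a y)%:P)
  = \sum_(U : {set V} | U \subset A) (\prod_(y in A :\: U) - a y) *: 'X^#|U|.
Proof.
rewrite big_mkcond /=.
rewrite (eq_bigr (fun y => (if y \in A then 'X else 0) + (if y \in A then (- a y)%:P else 1)));
  last by move=> y _; case: (y \in A); rewrite ?add0r // polyCN.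
rewrite bigA_distr (bigID (fun U : {set V} => U \subset A)) /=.
rewrite [X in _ + X]big1 ?addr0; last first.
  by move=> U /subsetPn[y yU yA]; rewrite (bigD1 y) //= yU (negbTE yA) mul0r.
apply: eq_bigr => U sUA; rewrite (bigID (fun y => y \in U)) /=.
rewrite (eq_bigr (fun _ => 'X)) => [|y yU]; last by rewrite yU (subsetP sUA).
rewrite prodr_const -mul_polyC mulrC (eq_bigr (fun y => if y \in A then (- a y)%:P else 1)).
  rewrite -big_mkcondr /= rmorph_prod; congr (_ * _).
  by apply: eq_bigl => y; rewrite !inE andbC.
by move=> y /negbTE ->.
Qed.

Lemma matchpolyE (S : {set V}) :
  matchpoly S =
  \sum_(T : {set V} | T \subset S) ((-1) ^+ #|S :\: T| * \prod_(y in S :\: T) a y) *: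
    \sum_(M | matching e T M) ((-1) ^+ #|M| * \prod_(E in M) c E) *: 'X^(#|T| - 2 * #|M|).
Proof.
under [RHS]eq_bigr => T _ do rewrite scaler_sumr.
rewrite (exchange_big_dep (matching e S)) /=; last first.
  move=> T M sTS; rewrite matching_cover (matching_cover e S) => /andP[-> cT] /=.
  exact: subset_trans cT sTS.
apply: eq_bigr => M mM; have := mM; rewrite matching_cover => /andP[mTM cMS].
rewrite /matching_term prod_XsubC_subsets scaler_sumr.
rewrite [RHS](reindex_onto (fun U => cover M :|: U) (fun T => T :\: cover M)) /=; last first.
  move=> T /andP[_]; rewrite matching_cover => /andP[_ cT].
  by apply/setP=> z; rewrite !inE; case: (boolP (z \in cover M)) => //= /(subsetP cT) ->.
apply: eq_big => U.
  rewrite matching_cover mTM subsetUl andbT subUset cMS /= setDUl setDv set0U subsetD.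
  by rewrite andbT (sameP eqP setDidPl).
move=> /subsetDP[_ dUC]; rewrite -setDDl cardsU setIC (disjoint_setI0 dUC) cards0 subn0.
by rewrite (card_cover_matching e_irr mM) addKn prodrN !scalerA mulrC.
Qed.

End MatchingPoly.

Section Multiplicity.
Variables (F : fieldType) (x : F).

Lemma mupZ (k : F) (p : {poly F}) : k != 0 -> mup x (k *: p) = mup x p.
Proof. by move=> k0; rewrite -mul_polyC mupMr // rootC. Qed.

Lemma dvdp_XsubCX_deriv n (p : {poly F}) :
  ('X - x%:P) ^+ n.+1 %| p -> ('X - x%:P) ^+ n %| p^`().
Proof.
case/dvdpP=> r ->; rewrite derivM deriv_exp derivXsubC mul1r /=.
by rewrite dvdp_add // ?exprS ?mulrA ?dvdp_mull // -mulr_natr dvdp_mulr.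
Qed.

Lemma dvdp_XsubC_mup_deriv (p : {poly F}) : ('X - x%:P) ^+ (mup x p).-1 %| p^`().
Proof.
have [->|p0] := eqVneq p 0; first by rewrite deriv0 dvdp0.
case E : (mup x p) => [|n]; first by rewrite dvd1p.
by apply: dvdp_XsubCX_deriv; rewrite -E -mup_geq.
Qed.

Lemma mup_wronskian (p q : {poly F}) : q * p^`() - p * q^`() != 0 ->
  ((mup x p + mup x q).-1 <= mup x (q * p^`() - p * q^`()))%N.
Proof.
have dvd_mup r : ('X - x%:P) ^+ mup x r %| r.
  by have [->|r0] := eqVneq r 0; [exact: dvdp0 | rewrite -mup_geq].
move=> W0; rewrite mup_geq // dvdp_sub //.
  apply: dvdp_trans (dvdp_mul (dvd_mup q) (dvdp_XsubC_mup_deriv p)).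
  by rewrite -exprD dvdp_exp2l //; case: (mup x p) => /= [|?]; lia.
apply: dvdp_trans (dvdp_mul (dvd_mup p) (dvdp_XsubC_mup_deriv q)).
by rewrite -exprD dvdp_exp2l //; case: (mup x q) => /= [|?]; lia.
Qed.

End Multiplicity.

Lemma mup_map (F K : fieldType) (f : {rmorphism F -> K}) x (p : {poly F}) : p != 0 ->
  mup (f x) (map_poly f p) = mup x p.
Proof.
move=> p0; have fp0 : map_poly f p != 0 by rewrite map_poly_eq0.
have le_mup n : (n <= mup (f x) (map_poly f p))%N = (n <= mup x p)%N.
  by rewrite !mup_geq // -(dvdp_map f) rmorphXn /= map_polyXsubC.
by apply/eqP; rewrite eqn_leq le_mup -le_mup !leqnn.
Qed.

Section PositiveRight.
Variables (R : realFieldType) (th : R).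
Local Notation XT := ('X - th%:P).

(* p is positive on a right neighbourhood of th, i.e. its lowest nonzero
   Taylor coefficient at th is positive. *)
Definition pos_right (p : {poly R}) := exists m q, p = q * XT ^+ m /\ 0 < q.[th].

Definition nneg_right (p : {poly R}) := p = 0 \/ pos_right p.

Lemma mup_mul_XsubCX (q : {poly R}) m : ~~ root q th -> mup th (q * XT ^+ m) = m.
Proof. by move=> qth; rewrite mupMr // mup_XsubCX eqxx. Qed.

Lemma pos_right_neq0 p : pos_right p -> p != 0.
Proof.
case=> m [q [-> qth]]; rewrite mulf_neq0 ?expf_neq0 ?polyXsubC_eq0 //.
by apply: contraTneq qth => ->; rewrite horner0 ltxx.
Qed.

Lemma pos_right_add_le p q : pos_right p -> pos_right q -> (mup th p <= mup th q)%N ->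
  pos_right (p + q) /\ mup th (p + q) = mup th p.
Proof.
move=> [m [p' [-> p'th]]] [n [q' [-> q'th]]].
rewrite !mup_mul_XsubCX ?lt0r_neq0 // => le_mn.
have -> : p' * XT ^+ m + q' * XT ^+ n = (p' + q' * XT ^+ (n - m)) * XT ^+ m.
  by rewrite mulrDl -mulrA -exprD subnK.
have pos : 0 < (p' + q' * XT ^+ (n - m)).[th].
  rewrite hornerD hornerM horner_exp hornerXsubC subrr expr0n.
  by case: (n - m)%N => [|k] /=; rewrite ?mulr1 ?mulr0 ?addr0 ?addr_gt0.
by rewrite mup_mul_XsubCX ?lt0r_neq0 //; split => //; exists m, (p' + q' * XT ^+ (n - m)).
Qed.

Lemma pos_rightD p q : pos_right p -> nneg_right q ->
  pos_right (p + q) /\ (mup th (p + q) <= mup th p)%N.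
Proof.
move=> pp [->|pq]; first by rewrite addr0.
have [le_pq|/ltnW le_qp] := leqP (mup th p) (mup th q).
  by have [? ->] := pos_right_add_le pp pq le_pq.
by rewrite addrC; have [? ->] := pos_right_add_le pq pp le_qp.
Qed.

Lemma nneg_rightD p q : nneg_right p -> nneg_right q -> nneg_right (p + q).
Proof.
move=> [->|pp] nq; first by rewrite add0r.
by right; have [] := pos_rightD pp nq.
Qed.

Lemma nneg_right_sum (I : finType) (P : pred I) (F : I -> {poly R}) :
  (forall i, P i -> nneg_right (F i)) -> nneg_right (\sum_(i | P i) F i).
Proof. by move=> H; apply: (big_ind nneg_right) => //; [left | exact: nneg_rightD]. Qed.

Lemma pos_rightZ k p : 0 < k -> pos_right p -> pos_right (k *: p).
Proof.
move=> k0 [m [q [-> qth]]]; exists m, (k *: q).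
by rewrite scalerAl hornerZ mulr_gt0.
Qed.

Lemma nneg_rightZ k p : 0 < k -> nneg_right p -> nneg_right (k *: p).
Proof. by move=> k0 [->|pp]; [left; rewrite scaler0 | right; apply: pos_rightZ]. Qed.

Lemma pos_right_sqr p : p != 0 -> pos_right (p * p).
Proof.
move=> p0; have [m [q]] := multiplicity_XsubC p th; rewrite p0 /= => qth ->.
exists (m + m)%N, (q * q); split; first by rewrite exprD; ring.
by rewrite hornerM -expr2 exprn_even_gt0 //= orbC -/(root q th) qth.
Qed.

End PositiveRight.

Section ChristoffelDarboux.
Variables (R : realFieldType) (V : finType) (e : rel V).
Hypotheses (e_sym : symmetric e) (e_irr : irreflexive e).
Variables (a : V -> R) (c : {set V} -> R) (th : R).
Hypothesis c_pos : forall u y, e u y -> 0 < c [set u; y].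

Local Notation P := (matchpoly e a c).

Definition darboux (S : {set V}) u v := P (S :\ u) * P (S :\ v) - P S * P (S :\ u :\ v).

Lemma darboux_rec (S : {set V}) u v : u \in S -> v \in S -> u != v ->
  darboux S u v = (if e u v then c [set u; v] *: (P (S :\ u :\ v) * P (S :\ u :\ v)) else 0)
     + \sum_(y in S :\ v | e u y) c [set u; y] *: darboux (S :\ u) y v.
Proof.
move=> uS vS uv; have uSv : u \in S :\ v by rewrite !inE uS andbT.
have split_v (f : V -> {poly R}) : \sum_(y in S | e u y) f y
    = (if e u v then f v else 0) + \sum_(y in S :\ v | e u y) f y.
  rewrite (bigID (pred1 v)) /=; congr (_ + _); last first.
    by apply: eq_bigl => y; rewrite !inE; case: (y != v); rewrite /= ?andbT ?andbF.
  case: ifP => euv.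
    by apply: big_pred1 => y /=; case: eqP => [->|]; rewrite ?vS ?euv ?andbF.
  by apply: big_pred0 => y /=; case: eqP => [->|]; rewrite ?euv ?andbF.
rewrite /darboux (matchpoly_rec e_sym e_irr _ _ uS) (matchpoly_rec e_sym e_irr _ _ uSv).
rewrite split_v [S :\ v :\ u]setD1C.
under [X in _ = _ + X]eq_bigr => y _ do
  rewrite scalerBr scalerAl scalerAr [S :\ u :\ y :\ v]setD1C.
rewrite sumrB -mulr_suml -mulr_sumr.
set s1 := \sum_(i in S :\ v | e u i) _; set s2 := \sum_(i in S :\ v | e u i) _.
by case: ifP => _; rewrite ?scalerAl; ring.
Qed.

Lemma nneg_right_edge_term (S : {set V}) u v :
  nneg_right th (if e u v then c [set u; v] *: (P S * P S) else 0).
Proof.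
case: ifP => euv; last by left.
by right; apply: pos_rightZ (c_pos euv) (pos_right_sqr _ (matchpoly_neq0 e_sym e_irr a c S)).
Qed.

Lemma darboux_nneg_right (S : {set V}) u v : u \in S -> v \in S -> u != v ->
  nneg_right th (darboux S u v).
Proof.
elim: {S}_.+1 {-2}S (ltnSn #|S|) u v => // n IH S ltS u v uS vS uv.
rewrite darboux_rec //; apply: nneg_rightD; first exact: nneg_right_edge_term.
apply: nneg_right_sum => y /andP[/setD1P[yv yS] euy]; apply: nneg_rightZ (c_pos euy) _.
have yu : y != u by apply: contraTneq euy => ->; rewrite e_irr.
apply: IH; rewrite ?inE ?yu ?yS ?vS ?yv 1?eq_sym ?uv //.
by move: ltS; rewrite (cardsD1 u S) uS.
Qed.

Lemma nneg_right_darboux_sum (S : {set V}) u v (Q : pred V) : u \in S -> v \in S -> u != v ->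
  (forall y, Q y -> (y \in S :\ v) && e u y) ->
  nneg_right th (\sum_(y | Q y) c [set u; y] *: darboux (S :\ u) y v).
Proof.
move=> uS vS uv subQ; apply: nneg_right_sum => y /subQ /andP[/setD1P[yv yS] euy].
have yu : y != u by apply: contraTneq euy => ->; rewrite e_irr.
apply: nneg_rightZ (c_pos euy) _.
by apply: darboux_nneg_right; rewrite ?inE ?yu ?yS ?vS ?yv 1?eq_sym ?uv.
Qed.

Lemma pos_right_darboux_edge (S : {set V}) u v : u \in S -> v \in S -> e u v ->
  pos_right th (darboux S u v) /\
  (mup th (darboux S u v) <= 2 * mup th (P (S :\ u :\ v)))%N.
Proof.
move=> uS vS euv; have uv : u != v by apply: contraTneq euv => ->; rewrite e_irr.
have P0 := matchpoly_neq0 e_sym e_irr a c (S :\ u :\ v).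
rewrite darboux_rec // euv.
have rest :=
  nneg_right_darboux_sum (Q := fun y => (y \in S :\ v) && e u y) uS vS uv (fun _ => id).
have [pos le] := pos_rightD (pos_rightZ (c_pos euv) (pos_right_sqr th P0)) rest.
by split => //; rewrite mupZ ?lt0r_neq0 ?c_pos // mupM // addnn -mul2n in le.
Qed.

Lemma pos_right_darboux_step (S : {set V}) u v y : u \in S -> v \in S -> u != v ->
  y \in S -> y != v -> e u y -> pos_right th (darboux (S :\ u) y v) ->
  pos_right th (darboux S u v) /\ (mup th (darboux S u v) <= mup th (darboux (S :\ u) y v))%N.
Proof.
move=> uS vS uv yS yv euy pos_y.
rewrite darboux_rec // (bigD1 y) /=; last by rewrite !inE yS yv euy.
have -> : mup th (darboux (S :\ u) y v) = mup th (c [set u; y] *: darboux (S :\ u) y v).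
  by rewrite mupZ ?lt0r_neq0 ?c_pos.
rewrite addrCA.
apply: pos_rightD; first exact: pos_rightZ (c_pos euy) pos_y.
apply: nneg_rightD; first exact: nneg_right_edge_term.
by apply: nneg_right_darboux_sum => // y' /andP[].
Qed.

Lemma pos_right_darboux_path (S : {set V}) x s : path e x s -> uniq (x :: s) ->
  {subset x :: s <= S} -> (0 < size s)%N ->
  pos_right th (darboux S x (last x s)) /\
  (mup th (darboux S x (last x s)) <= 2 * mup th (P (S :\: [set v in x :: s])))%N.
Proof.
elim: s S x => // y s IH S x /andP[exy pth] /andP[xN uq] sub _.
have xS : x \in S by apply: sub; rewrite inE eqxx.
have yS : y \in S by apply: sub; rewrite !inE eqxx orbT.
case: s => [|z t] /= in IH pth uq xN sub *.
  have -> : S :\: [set v in [:: x; y]] = S :\ x :\ y.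
    by apply/setP=> w; rewrite !inE negb_or andbA (andbC (w != x)).
  exact: pos_right_darboux_edge.
set v := last z t; have vzt : v \in z :: t by apply: mem_last.
have xv : x != v by apply: contraNneq xN => ->; rewrite inE vzt orbT.
have yv : y != v by move: uq => /andP[yN _]; apply: contraNneq yN => ->.
have sub' : {subset y :: z :: t <= S :\ x}.
  move=> w wP; rewrite in_setD1 andbC sub /=; last by rewrite in_cons wP orbT.
  by apply: contraNneq xN => <-.
have [pos_y le_y] := IH (S :\ x) y pth uq sub' isT.
have vS : v \in S by apply: sub; rewrite in_cons (in_cons y) vzt !orbT.
have [pos le] := pos_right_darboux_step xS vS xv yS yv exy pos_y.
by rewrite setD_cons; split; last exact: leq_trans le le_y.
Qed.

Lemma matchpoly_wronskian (S : {set V}) u : u \in S ->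
  P (S :\ u) * (P S)^`() - P S * (P (S :\ u))^`()
  = P (S :\ u) * P (S :\ u) + \sum_(v in S :\ u) darboux S u v.
Proof.
move=> uS; rewrite !deriv_matchpoly (big_setD1 u) //= /darboux sumrB -!mulr_sumr.
set s1 := \sum_(v in S :\ u) _; set s2 := \sum_(v in S :\ u) _; ring.
Qed.

Lemma mup_matchpoly_delete_path (S : {set V}) x s : path e x s -> uniq (x :: s) ->
  {subset x :: s <= S} -> (0 < size s)%N ->
  ((mup th (P S)).-1 <= mup th (P (S :\: [set v in x :: s])))%N.
Proof.
move=> pth uq sub s_gt0; set v := last x s.
have xS : x \in S by apply: sub; rewrite mem_head.
have xv : x != v.
  move: uq s_gt0 => /andP[xN _]; rewrite /v; case: s {pth sub v} xN => // y t xN _ /=.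
  by apply: contraNneq xN => ->; apply: mem_last.
have vSx : v \in S :\ x by rewrite in_setD1 eq_sym xv (sub _ (mem_last x s)).
have [pos_path le_path] := pos_right_darboux_path pth uq sub s_gt0.
rewrite -/v in pos_path le_path.
have nneg_rest : nneg_right th (\sum_(w in S :\ x | w != v) darboux S x w).
  apply: nneg_right_sum => w /andP[/setD1P[wx wS] _].
  by apply: darboux_nneg_right; rewrite // eq_sym.
have [pos_D le_D] := pos_rightD pos_path nneg_rest.
have Px0 := matchpoly_neq0 e_sym e_irr a c (S :\ x).
have pos_sqr := pos_right_sqr th Px0.
have W0 := mup_wronskian th (p := P S) (q := P (S :\ x)).
rewrite matchpoly_wronskian // (bigD1 v) //= in W0.
(* No cancellation: the order of the Wronskian is at most that of each summand. *)
have [_ le_sqr] := pos_rightD pos_sqr (or_intror pos_D).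
have [pos_W le_W] := pos_rightD pos_D (or_intror pos_sqr).
rewrite addrC in pos_W le_W.
have le_WC := leq_trans le_W (leq_trans le_D le_path).
rewrite mupM // in le_sqr; move: (W0 (pos_right_neq0 pos_W)) le_sqr le_WC.
set A := mup th (P S); set B := mup th (P (S :\ x)); set C := mup th (P (S :\: _)).
set W := mup th (_ * _ + _); lia.
Qed.

End ChristoffelDarboux.

Section ComplexWeights.
Variables (R : realType) (V : finType) (e : rel V) (w : {set V} -> R[i]) (w1 : V -> R).
Hypothesis e_irr : irreflexive e.

Definition sqr_norm (E : {set V}) : R := Normc.normc (w E) ^+ 2.

Lemma sqr_norm_gt0 E : w E != 0 -> 0 < sqr_norm E.
Proof.
move=> wE0; rewrite exprn_gt0 // lt_def; apply/andP; split.
  by apply/eqP => /Normc.eq0_normc; apply/eqP.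
by case: (w E) => ? ?; apply: sqrtr_ge0.
Qed.

Lemma eta_matchpoly (S : {set V}) :
  eta_w e w w1 S = map_poly (real_complex R) (matchpoly e w1 sqr_norm S).
Proof.
rewrite /eta_w (matchpolyE e_irr) rmorph_sum /=; apply: eq_bigr => T _.
rewrite map_polyZ rmorphM rmorphXn rmorphN1 rmorph_prod /=; congr (_ *: _).
rewrite /mu_w rmorph_sum /=; apply: eq_bigr => M _.
rewrite map_polyZ map_polyXn rmorphM rmorphXn rmorphN1 rmorph_prod /=; congr (_ *: _).
by rewrite normr_prod -prodrXl; congr (_ * _); apply: eq_bigr => E _; rewrite rmorphXn.
Qed.

End ComplexWeights.

Theorem corollary4p6 (R : realType) (V : finType) (e : rel V)
  (w : {set V} -> R[i]) (w1 : V -> R) (theta : R) (x : V) (s : seq V) :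
  simple_graph e ->
  (forall E, E \in edges e [set: V] -> w E != 0) ->
  path e x s -> uniq (x :: s) -> (0 < size s)%N ->
  (mult e w w1 theta (~: [set v in x :: s]) >= (mult e w w1 theta [set: V]).-1)%N.
Proof.
move=> [e_sym e_irr] w_neq0 pth uq s_gt0.
have c_pos u y : e u y -> 0 < sqr_norm w [set u; y].
  by move=> euy; apply/sqr_norm_gt0/w_neq0/edgesP; exists u, y; rewrite !in_setT.
rewrite /mult !eta_matchpoly // -[Complex theta 0]/(real_complex R theta).
rewrite !mup_map ?matchpoly_neq0 // -setTD.
exact (mup_matchpoly_delete_path e_sym e_irr w1 theta c_pos pth uq (fun _ _ => in_setT _) s_gt0).
Qed.
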